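(* Consider the model below with $\min\{M,M_f,N\}<1$ and $\epsilon_2\ge0$, fix all parameters other than $\epsilon_1$, and let $\delta:=(M-1)(1-M_f\beta)+\lambda\sigma N$. (i) There exists $\bar{\epsilon}_{BR,RPE}\in[-\infty,\infty)$, depending only on the model parameters, such that a bounded-rationality restricted-perceptions equilibrium (BR-RPE) exists if and only if $\epsilon_1\ge\bar{\epsilon}_{BR,RPE}$. (ii) If $\delta<0$, then $\bar{\epsilon}_{BR,RPE}=-\infty$. (iii) Let $\bar{\epsilon}_{BR}\in[-\infty,\infty)$ be the number such that a bounded-rationality equilibrium (BRE) exists if and only if $\epsilon_1\ge\bar{\epsilon}_{BR}$. If either ($\delta\ge0$ and $p+q\ge1$) or $\delta<0$, then $\bar{\epsilon}_{BR}\ge\bar{\epsilon}_{BR,RPE}$.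
   Context: Parameters: $0<\beta<1$, $\sigma,\lambda,\mu>0$, $\psi>1$, $M,M_f,N\in(0,1]$, $p,q\in(0,1]$ with $(p,q)\neq(1,1)$. The shock $\epsilon_t$ is a two-state Markov chain on $\{\epsilon_1,\epsilon_2\}$ with $\Pr(\epsilon_{t+1}=\epsilon_1\mid\epsilon_t=\epsilon_1)=p$, $\Pr(\epsilon_{t+1}=\epsilon_2\mid\epsilon_t=\epsilon_2)=q$; $\bar q:=(1-p)/(2-p-q)$. Model: $x_t=M\hat E_t x_{t+1}-\sigma(i_t-N\hat E_t\pi_{t+1})+\epsilon_t$, $\pi_t=\lambda x_t+M_f\beta\hat E_t\pi_{t+1}$, $i_t=\max\{\psi\pi_t,-\mu\}$. Say $Y_j=(x_j,\pi_j)$, $j=1,2$, solves the model given forecasts $Y^e_j=(x^e_j,\pi^e_j)$ if for $j=1,2$, with $i_j=\max\{\psi\pi_j,-\mu\}$: $x_j=Mx^e_j-\sigma(i_j-N\pi^e_j)+\epsilon_j$ and $\pi_j=\lambda x_j+M_f\beta\pi^e_j$. A BRE is $(Y_1,Y_2)$ solving the model given $Y^e_1=pY_1+(1-p)Y_2$, $Y^e_2=(1-q)Y_1+qY_2$. A BR-RPE is $(Y_1,Y_2)$ solving the model given $Y^e_1=Y^e_2=\bar qY_2+(1-\bar q)Y_1$. *)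

From Stdlib Require Import Reals.
Open Scope R_scope.

Definition rate (psi mu pi : R) : R := Rmax (psi * pi) (- mu).

Definition solves (beta sigma lam mu psi M Mf N : R) (eps x pi xe pie : R) : Prop :=
  x = M * xe - sigma * (rate psi mu pi - N * pie) + eps /\
  pi = lam * x + Mf * beta * pie.

Definition BRE_exists (beta sigma lam mu psi M Mf N p q eps1 eps2 : R) : Prop :=
  exists x1 pi1 x2 pi2 : R,
    solves beta sigma lam mu psi M Mf N eps1 x1 pi1
      (p * x1 + (1 - p) * x2) (p * pi1 + (1 - p) * pi2) /\
    solves beta sigma lam mu psi M Mf N eps2 x2 pi2
      ((1 - q) * x1 + q * x2) ((1 - q) * pi1 + q * pi2).

Definition qbar (p q : R) : R := (1 - p) / (2 - p - q).

Definition BRRPE_exists (beta sigma lam mu psi M Mf N p q eps1 eps2 : R) : Prop :=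
  exists x1 pi1 x2 pi2 : R,
    let xe := qbar p q * x2 + (1 - qbar p q) * x1 in
    let pie := qbar p q * pi2 + (1 - qbar p q) * pi1 in
    solves beta sigma lam mu psi M Mf N eps1 x1 pi1 xe pie /\
    solves beta sigma lam mu psi M Mf N eps2 x2 pi2 xe pie.

(* Thresholds in [-oo, oo): None encodes -oo, Some e the real e. *)
Definition ge_thr (eps : R) (t : option R) : Prop :=
  match t with None => True | Some e => e <= eps end.

Definition le_thr (a b : option R) : Prop :=
  match a, b with
  | None, _ => True
  | Some _, None => False
  | Some x, Some y => x <= y
  end.

Definition delta (beta sigma lam M Mf N : R) : R :=
  (M - 1) * (1 - Mf * beta) + lam * sigma * N.

(* Write g(pi) = pi + lam sigma i(pi).  Eliminating x, the model in a state with
   shock eps reads g(pi) = lam M xe + (lam sigma N + Mf beta) pie + lam eps, and g is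
   inverted by the concave piecewise-linear hinge
   h(z) = min(z + lam sigma mu, z / (1 + lam sigma psi)).
   Hence a BR-RPE is the same as a zero P (the common inflation forecast) of
   G(P) = (1 - qbar) h((1 + delta) P + lam eps1) + qbar h((1 + delta) P + lam eps2) - P.
   As G -> -oo at +oo, a zero exists iff G is nonnegative somewhere.  This condition
   is monotone in eps1, holds for eps1 >= 0, holds for every eps1 when delta < 0
   (then G -> +oo at -oo), and is closed in eps1 because for delta >= 0 the function G
   attains its maximum at one of its kinks; its infimum is the threshold.  A BRE with
   p + q >= 1 makes G nonnegative at pi_1 or at the stationary mean of (pi_1, pi_2),
   by concavity of h. *)

From Stdlib Require Import Reals Lra Psatz Classical.
Open Scope R_scope.

Definition hinge (s m z : R) : R := Rmin (z + m) (s * z).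

Definition hinge_kink (s m : R) : R := - m / (1 - s).

Section Hinge.
Variables s m : R.
Hypotheses (Hs : 0 < s < 1) (Hm : 0 < m).

Lemma hinge_below z : z <= hinge_kink s m -> hinge s m z = z + m.
Proof.
  intro Hz. apply Rmin_left.
  assert (H : (1 - s) * z <= (1 - s) * hinge_kink s m) by (apply Rmult_le_compat_l; lra).
  replace ((1 - s) * hinge_kink s m) with (- m) in H by (unfold hinge_kink; field; lra).
  lra.
Qed.

Lemma hinge_above z : hinge_kink s m <= z -> hinge s m z = s * z.
Proof.
  intro Hz. apply Rmin_right.
  assert (H : (1 - s) * hinge_kink s m <= (1 - s) * z) by (apply Rmult_le_compat_l; lra).
  replace ((1 - s) * hinge_kink s m) with (- m) in H by (unfold hinge_kink; field; lra).
  lra.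
Qed.

Lemma hinge_le_scaled z : hinge s m z <= s * z.
Proof. apply Rmin_r. Qed.

Lemma hinge_ge_id z : z <= 0 -> z <= hinge s m z.
Proof. intro Hz. unfold hinge, Rmin. destruct (Rle_dec (z + m) (s * z)); nra. Qed.

Lemma hinge_nonneg z : 0 <= z -> 0 <= hinge s m z.
Proof. intro Hz. unfold hinge, Rmin. destruct (Rle_dec (z + m) (s * z)); nra. Qed.

Lemma hinge_increment y z : y <= z ->
  s * (z - y) <= hinge s m z - hinge s m y <= z - y.
Proof.
  intro Hyz. unfold hinge, Rmin.
  destruct (Rle_dec (z + m) (s * z)), (Rle_dec (y + m) (s * y)); nra.
Qed.

Lemma hinge_le_hinge y z : y <= z -> hinge s m y <= hinge s m z.
Proof. intro Hyz. pose proof (hinge_increment y z Hyz). nra. Qed.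

(* Decreasing chord slopes, i.e. concavity of the hinge, in weighted form. *)
Lemma hinge_chords z1 y1 y2 z2 wl wr :
  z1 <= y1 -> y1 <= y2 -> y2 <= z2 -> 0 <= wl -> 0 <= wr ->
  wl * (y1 - z1) = wr * (z2 - y2) ->
  wr * (hinge s m z2 - hinge s m y2) <= wl * (hinge s m y1 - hinge s m z1).
Proof.
  intros H1 H12 H2 Hl Hr Hw.
  pose proof (hinge_increment z1 y1 H1) as [Hlo1 _].
  pose proof (hinge_increment y2 z2 H2) as [_ Hup2].
  destruct (Rle_dec y1 (hinge_kink s m)) as [Hy1 | Hy1].
  - rewrite (hinge_below y1), (hinge_below z1) by lra. nra.
  - rewrite (hinge_above y2), (hinge_above z2) by lra. nra.
Qed.

End Hinge.

Section RateInverse.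
Variables L psi mu : R.
Hypotheses (HL : 0 < L) (Hpsi : 0 < psi) (Hmu : 0 < mu).

Lemma rate_inverse_iff pi z :
  pi + L * rate psi mu pi = z <-> pi = hinge (/ (1 + L * psi)) (L * mu) z.
Proof.
  unfold hinge, rate, Rmin, Rmax.
  (* With z = (1 + L psi) w every case becomes polynomial. *)
  assert (Hz : z = (1 + L * psi) * (/ (1 + L * psi) * z)) by (field; nra).
  set (w := / (1 + L * psi) * z) in *. clearbody w. subst z.
  assert (HLpsi : 0 < L * psi) by nra.
  destruct (Rle_dec (psi * pi) (- mu)) as [Hpi | Hpi],
    (Rle_dec ((1 + L * psi) * w + L * mu) w) as [Hw | Hw];
    try apply Rnot_le_lt in Hpi; try apply Rnot_le_lt in Hw;
    split; intro H; try lra; try (subst pi; nra).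
  - assert (pi = (1 + L * psi) * w + L * mu) by lra. subst pi.
    assert (0 < psi * w + mu) by nra. nra.
  - assert (pi = w) by (apply (Rmult_eq_reg_l (1 + L * psi)); lra). subst pi. nra.
  - apply (Rmult_eq_reg_l (1 + L * psi)); lra.
Qed.
End RateInverse.

Lemma continuity_of_lipschitz (f : R -> R) (K : R) : 0 <= K ->
  (forall x y, Rabs (f x - f y) <= K * Rabs (x - y)) -> continuity f.
Proof.
  intros HK Hf x eps Heps. exists (eps / (K + 1)). split.
  - apply Rdiv_lt_0_compat; lra.
  - intros y [_ Hy]. simpl in *. unfold Rdist in *.
    apply Rle_lt_trans with (K * Rabs (y - x)); [apply Hf|].
    apply Rle_lt_trans with (K * (eps / (K + 1))).
    + apply Rmult_le_compat_l; lra.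
    + apply (Rmult_lt_reg_r (K + 1)); [lra|].
      replace (K * (eps / (K + 1)) * (K + 1)) with (K * eps) by (field; lra). nra.
Qed.

Definition rpe_gap (s m a u b1 b2 P : R) : R :=
  (1 - a) * hinge s m (u * P + b1) + a * hinge s m (u * P + b2) - P.

Section Gap.
Variables s m a u : R.
Hypotheses (Hs : 0 < s < 1) (Hm : 0 < m) (Ha : 0 <= a <= 1) (Hu : 0 < u) (Hsu : s * u < 1).

Lemma rpe_gap_increment b1 b2 P P' : P <= P' ->
  (s * u - 1) * (P' - P) <= rpe_gap s m a u b1 b2 P' - rpe_gap s m a u b1 b2 P
  <= (u - 1) * (P' - P).
Proof.
  intro HP. unfold rpe_gap.
  pose proof (hinge_increment s m Hs (u * P + b1) (u * P' + b1) ltac:(nra)).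
  pose proof (hinge_increment s m Hs (u * P + b2) (u * P' + b2) ltac:(nra)).
  nra.
Qed.

Lemma rpe_gap_continuous b1 b2 : continuity (rpe_gap s m a u b1 b2).
Proof.
  apply (continuity_of_lipschitz _ (u + 1)); [lra|]. intros P P'.
  destruct (Rle_dec P' P) as [HP | HP].
  - pose proof (rpe_gap_increment b1 b2 P' P HP).
    rewrite (Rabs_right (P - P')) by lra. apply Rabs_le. nra.
  - pose proof (rpe_gap_increment b1 b2 P P' ltac:(lra)).
    rewrite (Rabs_left (P - P')) by lra. apply Rabs_le. nra.
Qed.

Lemma rpe_gap_le_affine b1 b2 P :
  rpe_gap s m a u b1 b2 P <= (s * u - 1) * P + s * ((1 - a) * b1 + a * b2).
Proof.
  unfold rpe_gap.
  pose proof (hinge_le_scaled s m (u * P + b1)).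
  pose proof (hinge_le_scaled s m (u * P + b2)).
  nra.
Qed.

Lemma rpe_gap_root_of_nonneg b1 b2 P0 : 0 <= rpe_gap s m a u b1 b2 P0 ->
  exists P, rpe_gap s m a u b1 b2 P = 0.
Proof.
  intro H0.
  set (P1 := Rmax P0 (s * ((1 - a) * b1 + a * b2) / (1 - s * u))).
  assert (H1 : rpe_gap s m a u b1 b2 P1 <= 0).
  { assert (Hb : s * ((1 - a) * b1 + a * b2) <= (1 - s * u) * P1).
    { apply (Rle_trans _ ((1 - s * u) * (s * ((1 - a) * b1 + a * b2) / (1 - s * u)))).
      - right. field. lra.
      - apply Rmult_le_compat_l; [lra | apply Rmax_r]. }
    pose proof (rpe_gap_le_affine b1 b2 P1). lra. }
  destruct (IVT_cor (rpe_gap s m a u b1 b2) P0 P1) as [P [_ HP]].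
  - apply rpe_gap_continuous.
  - apply Rmax_l.
  - nra.
  - exists P. exact HP.
Qed.

Lemma rpe_gap_shift b1 b1' b2 P : b1 <= b1' ->
  rpe_gap s m a u b1 b2 P <= rpe_gap s m a u b1' b2 P
  <= rpe_gap s m a u b1 b2 P + (b1' - b1).
Proof.
  intro Hb. unfold rpe_gap.
  pose proof (hinge_increment s m Hs (u * P + b1) (u * P + b1') ltac:(lra)) as [Hlo Hup].
  assert (0 <= hinge s m (u * P + b1') - hinge s m (u * P + b1)) by nra.
  split; nra.
Qed.

Lemma rpe_gap_nonneg_at_0 b1 b2 : 0 <= b1 -> 0 <= b2 -> 0 <= rpe_gap s m a u b1 b2 0.
Proof.
  intros Hb1 Hb2. unfold rpe_gap.
  pose proof (hinge_nonneg s m Hs Hm (u * 0 + b1) ltac:(lra)).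
  pose proof (hinge_nonneg s m Hs Hm (u * 0 + b2) ltac:(lra)).
  nra.
Qed.

Lemma rpe_gap_nonneg_of_slope_lt_1 b1 b2 : u < 1 ->
  exists P, 0 <= rpe_gap s m a u b1 b2 P.
Proof.
  intro Hu1.
  set (B := Rabs b1 + Rabs b2).
  assert (HB1 : b1 <= B /\ b2 <= B).
  { unfold B. pose proof (Rle_abs b1). pose proof (Rle_abs b2).
    pose proof (Rabs_pos b1). pose proof (Rabs_pos b2). lra. }
  assert (HB2 : - B <= (1 - a) * b1 + a * b2).
  { unfold B. pose proof (Rabs_pos b1). pose proof (Rabs_pos b2).
    pose proof (Rle_abs (- b1)). pose proof (Rle_abs (- b2)).
    rewrite Rabs_Ropp in *. nra. }
  set (P := Rmin (- B / u) (- B / (1 - u))).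
  assert (HuP : u * P <= - B).
  { apply (Rle_trans _ (u * (- B / u))); [apply Rmult_le_compat_l; [lra | apply Rmin_l]|].
    right. field. lra. }
  assert (HuP' : B <= (u - 1) * P).
  { apply (Rle_trans _ ((u - 1) * (- B / (1 - u)))); [right; field; lra|].
    apply Rmult_le_compat_neg_l; [lra | apply Rmin_r]. }
  exists P. unfold rpe_gap.
  pose proof (hinge_ge_id s m Hs Hm (u * P + b1) ltac:(lra)).
  pose proof (hinge_ge_id s m Hs Hm (u * P + b2) ltac:(lra)).
  nra.
Qed.

Lemma rpe_gap_nonneg_of_pair b1 b2 k pi1 pi2 : b1 <= b2 -> 0 <= k <= u ->
  pi1 = hinge s m (u * ((1 - a) * pi1 + a * pi2) + b1 + k * a * (pi1 - pi2)) ->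
  pi2 = hinge s m (u * ((1 - a) * pi1 + a * pi2) + b2 - k * (1 - a) * (pi1 - pi2)) ->
  exists P, 0 <= rpe_gap s m a u b1 b2 P.
Proof.
  intros Hb Hk H1 H2.
  remember ((1 - a) * pi1 + a * pi2) as Q eqn:HQ.
  remember (pi1 - pi2) as D eqn:HD.
  destruct (Rlt_le_dec 0 D) as [HDpos | HDneg].
  - exists pi1. unfold rpe_gap.
    assert (Hz : u * Q + k * a * D <= u * pi1).
    { assert (0 <= (u - k) * (a * D)) by (apply Rmult_le_pos; nra).
      replace (u * pi1) with (u * Q + u * a * D) by (subst; ring). nra. }
    pose proof (hinge_le_hinge s m Hs (u * Q + b1 + k * a * D) (u * pi1 + b1) ltac:(lra)).
    pose proof (hinge_le_hinge s m Hs (u * Q + b1 + k * a * D) (u * pi1 + b2) ltac:(lra)).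
    rewrite <- H1 in *. nra.
  - exists Q. unfold rpe_gap.
    assert (k * a * D <= 0) by (assert (0 <= k * a) by nra; nra).
    assert (k * (1 - a) * D <= 0) by (assert (0 <= k * (1 - a)) by nra; nra).
    pose proof (hinge_chords s m Hs (u * Q + b1 + k * a * D) (u * Q + b1) (u * Q + b2)
      (u * Q + b2 - k * (1 - a) * D) (1 - a) a ltac:(lra) ltac:(lra) ltac:(lra)
      ltac:(lra) ltac:(lra) ltac:(ring)) as Hchord.
    rewrite <- H1, <- H2 in Hchord. subst Q. lra.
Qed.
End Gap.

Lemma rpe_gap_swap s m a u b1 b2 P :
  rpe_gap s m a u b1 b2 P = rpe_gap s m (1 - a) u b2 b1 P.
Proof. unfold rpe_gap. ring. Qed.

Section GapMax.
Variables s m u : R.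
Hypotheses (Hs : 0 < s < 1) (Hu : 1 <= u) (Hsu : s * u < 1).

(* These are the kinks of the two hinge terms.  Left of both the gap has slope
   u - 1 >= 0, right of both slope s u - 1 < 0, and in between it is affine. *)
Lemma rpe_gap_le_kinks a b1 b2 P : 0 <= a <= 1 -> b2 <= b1 ->
  rpe_gap s m a u b1 b2 P <= rpe_gap s m a u b1 b2 ((hinge_kink s m - b1) / u) \/
  rpe_gap s m a u b1 b2 P <= rpe_gap s m a u b1 b2 ((hinge_kink s m - b2) / u).
Proof.
  intros Ha Hb.
  set (z := hinge_kink s m). set (K1 := (z - b1) / u). set (K2 := (z - b2) / u).
  assert (E1 : u * K1 = z - b1) by (unfold K1; field; lra).
  assert (E2 : u * K2 = z - b2) by (unfold K2; field; lra).
  assert (Hbelow : forall b Q, u * Q + b <= z -> hinge s m (u * Q + b) = u * Q + b + m)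
    by (intros; apply hinge_below; auto).
  assert (Habove : forall b Q, z <= u * Q + b -> hinge s m (u * Q + b) = s * (u * Q + b))
    by (intros; apply hinge_above; auto).
  unfold rpe_gap.
  destruct (Rle_dec P K1) as [HP1 | HP1]; [|destruct (Rle_dec P K2) as [HP2 | HP2]].
  - left. rewrite !Hbelow by nra. nra.
  - rewrite (Habove b1 P), (Hbelow b2 P), (Habove b1 K1), (Hbelow b2 K1),
      (Habove b1 K2), (Hbelow b2 K2) by nra.
    destruct (Rle_dec 0 ((1 - a) * s * u + a * u - 1)); [right | left]; nra.
  - right. rewrite !Habove by nra. nra.
Qed.

Lemma rpe_gap_attains_max a b1 b2 : 0 <= a <= 1 ->
  exists K, forall P, rpe_gap s m a u b1 b2 P <= rpe_gap s m a u b1 b2 K.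
Proof.
  intro Ha.
  assert (Hkinks : exists K1 K2, forall P,
    rpe_gap s m a u b1 b2 P <= rpe_gap s m a u b1 b2 K1 \/
    rpe_gap s m a u b1 b2 P <= rpe_gap s m a u b1 b2 K2).
  { destruct (Rle_dec b2 b1).
    - do 2 eexists. intro P. apply rpe_gap_le_kinks; assumption.
    - do 2 eexists. intro P. rewrite !(rpe_gap_swap s m a u b1 b2).
      apply rpe_gap_le_kinks; lra. }
  destruct Hkinks as (K1 & K2 & HK).
  destruct (Rle_dec (rpe_gap s m a u b1 b2 K1) (rpe_gap s m a u b1 b2 K2));
    [exists K2 | exists K1]; intro P; destruct (HK P); lra.
Qed.

End GapMax.

Lemma threshold_exists (S : R -> Prop) :
  (forall x y, x <= y -> S x -> S y) ->
  (exists x, S x) ->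
  (forall e, (forall eta, 0 < eta -> S (e + eta)) -> S e) ->
  exists t, forall e, S e <-> ge_thr e t.
Proof.
  intros Hup [x0 Hx0] Hclosed.
  destruct (classic (forall e, S e)) as [Hall | Hnall].
  { exists None. intro e. simpl. split; auto. }
  destruct (not_all_ex_not _ _ Hnall) as [e0 He0].
  assert (Hlower : forall e, S e -> e0 < e).
  { intros e He. apply Rnot_le_lt. intro Hle. exact (He0 (Hup e e0 Hle He)). }
  set (E := fun y => S (- y)).
  assert (Hbound : bound E).
  { exists (- e0). intros y Hy. pose proof (Hlower _ Hy). lra. }
  assert (Hne : exists y, E y).
  { exists (- x0). unfold E. rewrite Ropp_involutive. exact Hx0. }
  destruct (completeness E Hbound Hne) as [sup [Hub Hleast]].
  assert (Hinf : S (- sup)).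
  { apply Hclosed. intros eta Heta. apply NNPP. intro Hn.
    assert (Hub_eta : is_upper_bound E (sup - eta)).
    { intros y Hy. apply Rnot_lt_le. intro Hlt.
      apply Hn, (Hup (- y)); [lra | exact Hy]. }
    specialize (Hleast _ Hub_eta). lra. }
  exists (Some (- sup)). intro e. simpl. split.
  - intro He. assert (HEe : E (- e)) by (unfold E; rewrite Ropp_involutive; exact He).
    specialize (Hub _ HEe). lra.
  - intro He. exact (Hup _ _ He Hinf).
Qed.

Lemma threshold_none (S : R -> Prop) t :
  (forall e, S e <-> ge_thr e t) -> (forall e, S e) -> t = None.
Proof.
  intros Ht Hall. destruct t as [x|]; [|reflexivity].
  pose proof (proj1 (Ht (x - 1)) (Hall (x - 1))) as H. simpl in H. lra.
Qed.

Lemma le_thr_of_subset (A B : R -> Prop) ta tb :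
  (forall e, A e <-> ge_thr e ta) -> (forall e, B e <-> ge_thr e tb) ->
  (forall e, B e -> A e) -> le_thr ta tb.
Proof.
  intros Ha Hb Hsub. destruct ta as [x|], tb as [y|]; simpl; auto.
  - exact (proj1 (Ha y) (Hsub y (proj2 (Hb y) (Rle_refl y)))).
  - pose proof (proj1 (Ha (x - 1)) (Hsub (x - 1) (proj2 (Hb (x - 1)) I))) as H.
    simpl in H. lra.
Qed.

Section Model.
Variables beta sigma lam mu psi M Mf N p q eps2 : R.
Hypotheses (Hbeta : 0 < beta < 1) (Hsigma : 0 < sigma) (Hlam : 0 < lam) (Hmu : 0 < mu)
  (Hpsi : 1 < psi) (HM : 0 < M <= 1) (HMf : 0 < Mf <= 1) (HN : 0 < N <= 1)
  (Hp : 0 < p <= 1) (Hq : 0 < q <= 1) (Hpq : ~ (p = 1 /\ q = 1)) (Heps2 : 0 <= eps2).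

Let s := / (1 + lam * sigma * psi).
Let m := lam * sigma * mu.
Let a := qbar p q.
Let u := 1 + delta beta sigma lam M Mf N.

Let s_bounds : 0 < s < 1.
Proof.
  assert (0 < lam * sigma * psi) by (apply Rmult_lt_0_compat; nra).
  split; [apply Rinv_0_lt_compat | rewrite <- Rinv_1; apply Rinv_lt_contravar]; lra.
Qed.

Let m_pos : 0 < m.
Proof. unfold m. apply Rmult_lt_0_compat; nra. Qed.

Let pq_lt_2 : 0 < 2 - p - q.
Proof. destruct (Req_dec p 1), (Req_dec q 1); try tauto; lra. Qed.

Let a_bounds : 0 <= a <= 1.
Proof.
  unfold a, qbar. split.
  - apply Rmult_le_pos; [lra | left; apply Rinv_0_lt_compat; lra].
  - apply (Rmult_le_reg_r (2 - p - q)); [lra|]. field_simplify; lra.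
Qed.

Let Mfbeta_bounds : 0 < Mf * beta < 1.
Proof. split; nra. Qed.

Let u_ge : M * Mf * beta <= u /\ u <= 1 + lam * sigma * N.
Proof.
  unfold u, delta. assert (0 < lam * sigma * N) by (apply Rmult_lt_0_compat; nra).
  split; nra.
Qed.

Let u_pos : 0 < u.
Proof. pose proof u_ge. assert (0 < M * Mf * beta) by nra. lra. Qed.

Let su_lt_1 : s * u < 1.
Proof.
  pose proof u_ge.
  assert (lam * sigma * N < lam * sigma * psi) by (apply Rmult_lt_compat_l; nra).
  unfold s. apply (Rmult_lt_reg_l (1 + lam * sigma * psi)); [nra|].
  rewrite <- Rmult_assoc, Rinv_r by nra. lra.
Qed.

Definition rpe_feasible (e1 : R) : Prop :=
  exists P, 0 <= rpe_gap s m a u (lam * e1) (lam * eps2) P.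

Lemma solves_iff eps x pi xe pie :
  solves beta sigma lam mu psi M Mf N eps x pi xe pie <->
  lam * x = pi - Mf * beta * pie /\
  pi = hinge s m (lam * (M * xe + sigma * N * pie + eps) + Mf * beta * pie).
Proof.
  unfold solves, s, m.
  rewrite <- (rate_inverse_iff (lam * sigma) psi mu) by nra.
  split; intros [H1 H2]; split; try lra.
  - subst x. lra.
  - apply (Rmult_eq_reg_l lam); lra.
Qed.

Lemma brrpe_iff_gap_root e1 :
  BRRPE_exists beta sigma lam mu psi M Mf N p q e1 eps2 <->
  exists P, rpe_gap s m a u (lam * e1) (lam * eps2) P = 0.
Proof.
  assert (Harg : forall xe P e, lam * xe = (1 - Mf * beta) * P ->
    lam * (M * xe + sigma * N * P + e) + Mf * beta * P = u * P + lam * e).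
  { intros xe P e Hxe.
    replace (lam * (M * xe + sigma * N * P + e))
      with (M * (lam * xe) + lam * sigma * N * P + lam * e) by ring.
    rewrite Hxe. unfold u, delta. ring. }
  unfold BRRPE_exists. fold a. split.
  - intros (x1 & pi1 & x2 & pi2 & H1 & H2). cbv zeta in H1, H2.
    rewrite solves_iff in H1, H2.
    destruct H1 as [Hx1 Hpi1], H2 as [Hx2 Hpi2].
    exists (a * pi2 + (1 - a) * pi1).
    rewrite Harg in Hpi1, Hpi2.
    2, 3: replace (lam * (a * x2 + (1 - a) * x1))
            with (a * (lam * x2) + (1 - a) * (lam * x1)) by ring;
          rewrite Hx1, Hx2; ring.
    unfold rpe_gap. rewrite <- Hpi1, <- Hpi2. ring.
  - intros [P HP]. unfold rpe_gap in HP.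
    set (pi1 := hinge s m (u * P + lam * e1)) in HP.
    set (pi2 := hinge s m (u * P + lam * eps2)) in HP.
    assert (Havg : a * pi2 + (1 - a) * pi1 = P) by lra.
    exists ((pi1 - Mf * beta * P) / lam), pi1, ((pi2 - Mf * beta * P) / lam), pi2.
    cbv zeta. rewrite Havg.
    assert (Hxe : lam * (a * ((pi2 - Mf * beta * P) / lam)
                         + (1 - a) * ((pi1 - Mf * beta * P) / lam))
                  = (1 - Mf * beta) * P).
    { replace (lam * (a * ((pi2 - Mf * beta * P) / lam)
                     + (1 - a) * ((pi1 - Mf * beta * P) / lam)))
        with (a * pi2 + (1 - a) * pi1 - Mf * beta * P) by (field; lra).
      rewrite Havg. ring. }
    rewrite !solves_iff, !(Harg _ _ _ Hxe).
    split; split; trivial; field; lra.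
Qed.

Lemma brrpe_iff_feasible e1 :
  BRRPE_exists beta sigma lam mu psi M Mf N p q e1 eps2 <-> rpe_feasible e1.
Proof.
  rewrite brrpe_iff_gap_root. split; intros [P HP].
  - exists P. lra.
  - exact (rpe_gap_root_of_nonneg s m a u s_bounds a_bounds u_pos su_lt_1 _ _ P HP).
Qed.

Lemma rpe_feasible_mono x y : x <= y -> rpe_feasible x -> rpe_feasible y.
Proof.
  intros Hxy [P HP]. exists P.
  pose proof (rpe_gap_shift s m a u s_bounds a_bounds (lam * x) (lam * y) (lam * eps2) P
                ltac:(nra)).
  lra.
Qed.

Lemma rpe_feasible_of_nonneg e1 : 0 <= e1 -> rpe_feasible e1.
Proof.
  intro He. exists 0. apply rpe_gap_nonneg_at_0; auto; nra.
Qed.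

Lemma rpe_feasible_of_delta_neg e1 :
  delta beta sigma lam M Mf N < 0 -> rpe_feasible e1.
Proof.
  intro Hd. apply rpe_gap_nonneg_of_slope_lt_1; auto. unfold u. lra.
Qed.

Lemma rpe_feasible_right_closed e1 :
  (forall eta, 0 < eta -> rpe_feasible (e1 + eta)) -> rpe_feasible e1.
Proof.
  intro Hright.
  destruct (Rlt_le_dec (delta beta sigma lam M Mf N) 0) as [Hd | Hd].
  { apply rpe_feasible_of_delta_neg. exact Hd. }
  destruct (rpe_gap_attains_max s m u s_bounds ltac:(unfold u; lra) su_lt_1 a
              (lam * e1) (lam * eps2) a_bounds) as [K HK].
  destruct (Rle_lt_dec 0 (rpe_gap s m a u (lam * e1) (lam * eps2) K)) as [HK0 | HK0].
  { exists K. exact HK0. }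
  set (eta := - rpe_gap s m a u (lam * e1) (lam * eps2) K / (2 * lam)).
  assert (Heta : 0 < eta).
  { unfold eta, Rdiv. apply Rmult_lt_0_compat; [lra | apply Rinv_0_lt_compat; lra]. }
  destruct (Hright eta Heta) as [P HP].
  pose proof (rpe_gap_shift s m a u s_bounds a_bounds (lam * e1) (lam * (e1 + eta))
                (lam * eps2) P ltac:(nra)) as [_ Hshift].
  assert (lam * (e1 + eta) - lam * e1 = - rpe_gap s m a u (lam * e1) (lam * eps2) K / 2)
    by (unfold eta; field; lra).
  pose proof (HK P). lra.
Qed.

Lemma bre_rpe_feasible e1 : 1 <= p + q ->
  BRE_exists beta sigma lam mu psi M Mf N p q e1 eps2 -> rpe_feasible e1.
Proof.
  intros Hpq1 HBRE.
  destruct (Rle_dec e1 eps2) as [He | He]; [| apply rpe_feasible_of_nonneg; lra].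
  destruct HBRE as (x1 & pi1 & x2 & pi2 & H1 & H2).
  rewrite solves_iff in H1, H2. destruct H1 as [Hx1 Hpi1], H2 as [Hx2 Hpi2].
  (* With rho = p + q - 1, Q = (1 - qbar) pi1 + qbar pi2 and D = pi1 - pi2, the BRE
     forecasts are Q + rho qbar D in state 1 and Q - rho (1 - qbar) D in state 2;
     this shifts the RPE hinge arguments by k qbar D and - k (1 - qbar) D. *)
  set (k := (p + q - 1) * (u + M * Mf * beta * (2 - p - q))).
  apply (rpe_gap_nonneg_of_pair s m a u s_bounds a_bounds _ _ k pi1 pi2).
  - nra.
  - pose proof u_ge. assert (Hrho : 0 <= p + q - 1 <= 1) by lra.
    assert (0 <= M * Mf * beta) by nra.
    assert (0 <= (2 - p - q) * (u - (p + q - 1) * (M * Mf * beta))) by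
      (apply Rmult_le_pos; nra).
    assert (0 <= (p + q - 1) * (u + M * Mf * beta * (2 - p - q))) by
      (apply Rmult_le_pos; nra).
    unfold k. split; nra.
  - rewrite Hpi1 at 1. f_equal.
    replace (lam * (M * (p * x1 + (1 - p) * x2) + sigma * N * (p * pi1 + (1 - p) * pi2) + e1))
      with (M * (p * (lam * x1) + (1 - p) * (lam * x2))
            + lam * sigma * N * (p * pi1 + (1 - p) * pi2) + lam * e1) by ring.
    rewrite Hx1, Hx2. unfold k, u, a, qbar, delta. field. lra.
  - rewrite Hpi2 at 1. f_equal.
    replace (lam * (M * ((1 - q) * x1 + q * x2) + sigma * N * ((1 - q) * pi1 + q * pi2) + eps2))
      with (M * ((1 - q) * (lam * x1) + q * (lam * x2))
            + lam * sigma * N * ((1 - q) * pi1 + q * pi2) + lam * eps2) by ring.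
    rewrite Hx1, Hx2. unfold k, u, a, qbar, delta. field. lra.
Qed.

End Model.

Theorem proposition6
  (beta sigma lam mu psi M Mf N p q eps2 : R)
  (Hbeta : 0 < beta < 1) (Hsigma : 0 < sigma) (Hlam : 0 < lam) (Hmu : 0 < mu)
  (Hpsi : 1 < psi)
  (HM : 0 < M <= 1) (HMf : 0 < Mf <= 1) (HN : 0 < N <= 1)
  (Hp : 0 < p <= 1) (Hq : 0 < q <= 1) (Hpq : ~ (p = 1 /\ q = 1))
  (Hmin : Rmin M (Rmin Mf N) < 1) (Heps2 : 0 <= eps2) :
  exists eRPE : option R,
    (* (i) *)
    (forall eps1 : R,
       BRRPE_exists beta sigma lam mu psi M Mf N p q eps1 eps2 <-> ge_thr eps1 eRPE) /\
    (* (ii) *)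
    (delta beta sigma lam M Mf N < 0 -> eRPE = None) /\
    (* (iii) *)
    (forall eBR : option R,
       (forall eps1 : R,
          BRE_exists beta sigma lam mu psi M Mf N p q eps1 eps2 <-> ge_thr eps1 eBR) ->
       ((0 <= delta beta sigma lam M Mf N /\ 1 <= p + q) \/
        delta beta sigma lam M Mf N < 0) ->
       le_thr eRPE eBR).
Proof.
  destruct (threshold_exists (rpe_feasible beta sigma lam mu psi M Mf N p q eps2))
    as [t Ht].
  - intros x y Hxy. apply rpe_feasible_mono; auto.
  - exists 0. apply rpe_feasible_of_nonneg; auto. lra.
  - intro e. apply rpe_feasible_right_closed; auto.
  - exists t. split; [|split].
    + intro e1. rewrite brrpe_iff_feasible by auto. apply Ht.
    + intro Hd. apply (threshold_none _ t Ht). intro e1.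
      apply rpe_feasible_of_delta_neg; auto.
    + intros tb Htb Hcase. apply (le_thr_of_subset _ _ t tb Ht Htb).
      intros e1 He1. destruct Hcase as [[_ Hpq1] | Hd].
      * apply bre_rpe_feasible; auto.
      * apply rpe_feasible_of_delta_neg; auto.
Qed.
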